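(* Let $a,b,g,m,n>0$ and $0<e<1$, and consider the planar system $$\dot x=a-ex-\frac{xy}{1+gy},\qquad \dot y=\frac{xy}{1+gy}-y-\frac{my}{b+ny}.$$ Let $E_0=\left(\frac{a}{e},0\right)$ be its disease-free equilibrium. Then: (1) if $a<\frac{e(m+b)}{b}$, $E_0$ is locally asymptotically stable and is a stable node; if $a>\frac{e(m+b)}{b}$, $E_0$ is a saddle point; (2) if $a=\frac{e(m+b)}{b}$ and $n\neq\frac{(eg+1)b^2+m(eg+1)b}{me}$, then $E_0$ is a saddle-node.
   Context: The system is a rescaled SIR epidemic model with saturated infection rate and saturated treatment rate; $x$ is the (rescaled) susceptible population and $y$ the (rescaled) infected population. *)

From Stdlib Require Import Reals.
From Coquelicot Require Import Coquelicot.
Open Scope R_scope.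

Definition dx (f : R -> R -> R) (x y : R) : R := Derive (fun u => f u y) x.
Definition dy (f : R -> R -> R) (x y : R) : R := Derive (fun v => f x v) y.

Definition dxx (f : R -> R -> R) (x y : R) : R := Derive (fun u => dx f u y) x.
Definition dxy (f : R -> R -> R) (x y : R) : R := Derive (fun v => dx f x v) y.
Definition dyy (f : R -> R -> R) (x y : R) : R := Derive (fun v => dy f x v) y.

Definition is_equilibrium (P Q : R -> R -> R) (x0 y0 : R) : Prop :=
  P x0 y0 = 0 /\ Q x0 y0 = 0.

Definition jac_tr (P Q : R -> R -> R) (x0 y0 : R) : R := dx P x0 y0 + dy Q x0 y0.
Definition jac_det (P Q : R -> R -> R) (x0 y0 : R) : R :=
  dx P x0 y0 * dy Q x0 y0 - dy P x0 y0 * dx Q x0 y0.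

(* l1, l2 are the (real) eigenvalues of the Jacobian at (x0,y0), i.e. the
   characteristic polynomial is (X - l1)(X - l2). *)
Definition jac_eigenvalues (P Q : R -> R -> R) (x0 y0 l1 l2 : R) : Prop :=
  l1 + l2 = jac_tr P Q x0 y0 /\ l1 * l2 = jac_det P Q x0 y0.

Definition stable_node (P Q : R -> R -> R) (x0 y0 : R) : Prop :=
  is_equilibrium P Q x0 y0 /\
  exists l1 l2, jac_eigenvalues P Q x0 y0 l1 l2 /\ l1 < 0 /\ l2 < 0.

Definition saddle (P Q : R -> R -> R) (x0 y0 : R) : Prop :=
  is_equilibrium P Q x0 y0 /\
  exists l1 l2, jac_eigenvalues P Q x0 y0 l1 l2 /\ l1 < 0 < l2.

(* Saddle-node: equilibrium whose Jacobian has a simple zero eigenvalue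
   (det = 0, trace <> 0), and whose center-manifold reduction has a nonzero
   quadratic coefficient: for a right null vector v and a left null vector w
   of the Jacobian, w . D^2F(x0,y0)[v,v] <> 0. *)
Definition hess_vv (f : R -> R -> R) (x0 y0 v1 v2 : R) : R :=
  v1 ^ 2 * dxx f x0 y0 + 2 * v1 * v2 * dxy f x0 y0 + v2 ^ 2 * dyy f x0 y0.

Definition saddle_node (P Q : R -> R -> R) (x0 y0 : R) : Prop :=
  is_equilibrium P Q x0 y0 /\
  jac_det P Q x0 y0 = 0 /\ jac_tr P Q x0 y0 <> 0 /\
  exists v1 v2 w1 w2 : R,
    (v1 <> 0 \/ v2 <> 0) /\ (w1 <> 0 \/ w2 <> 0) /\
    dx P x0 y0 * v1 + dy P x0 y0 * v2 = 0 /\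
    dx Q x0 y0 * v1 + dy Q x0 y0 * v2 = 0 /\
    w1 * dx P x0 y0 + w2 * dx Q x0 y0 = 0 /\
    w1 * dy P x0 y0 + w2 * dy Q x0 y0 = 0 /\
    w1 * hess_vv P x0 y0 v1 v2 + w2 * hess_vv Q x0 y0 v1 v2 <> 0.

Definition is_solution_on (P Q : R -> R -> R) (T : Rbar) (X Y : R -> R) : Prop :=
  forall t, 0 <= t -> Rbar_lt t T ->
    is_derive X t (P (X t) (Y t)) /\ is_derive Y t (Q (X t) (Y t)).

Definition dist2 (x y x0 y0 : R) : R := sqrt ((x - x0) ^ 2 + (y - y0) ^ 2).

Definition locally_asymptotically_stable (P Q : R -> R -> R) (x0 y0 : R) : Prop :=
  is_equilibrium P Q x0 y0 /\
  (forall eps, 0 < eps -> exists delta, 0 < delta /\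
     forall (T : Rbar) (X Y : R -> R), is_solution_on P Q T X Y ->
       dist2 (X 0) (Y 0) x0 y0 < delta ->
       forall t, 0 <= t -> Rbar_lt t T -> dist2 (X t) (Y t) x0 y0 < eps) /\
  (exists delta, 0 < delta /\
     forall X Y : R -> R, is_solution_on P Q p_infty X Y ->
       dist2 (X 0) (Y 0) x0 y0 < delta ->
       is_lim X p_infty x0 /\ is_lim Y p_infty y0).

From Stdlib Require Import Reals Lra Psatz.
From Coquelicot Require Import Coquelicot.
Open Scope R_scope.

(* The Jacobian at E0 = (a/e, 0) is upper triangular with eigenvalues -e and
   sigma = a/e - 1 - m/b, and e * sigma = a - e (m + b) / b; this gives the
   stable node and the saddle.  When sigma = 0, v = (-a/e^2, 1) and w = (0, 1)
   are right and left null vectors of the Jacobian, and w . D^2F[v, v] is a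
   nonzero multiple of n minus the excluded value.
   For sigma < 0, asymptotic stability comes from the Lyapunov function
   V = (x - a/e)^2 + K y^2: near E0 the incidence x y / (1 + g y) is bounded and
   the per-capita growth rate of y stays below sigma / 2 < 0, so for K large
   enough V' <= -k V along solutions.  Small sublevel sets of V are then forward
   invariant and V decays like 1 / (1 + k t). *)

Lemma continuous_lt_locally {U : UniformSpace} (f : U -> R) (p : U) (r : R) :
  continuous f p -> f p < r -> locally p (fun q => f q < r).
Proof.
  intros Hf Hr. apply (Hf (fun z => z < r)).
  exists (mkposreal _ (proj2 (Rlt_0_minus _ _) Hr)).
  intros z Hz. apply Rabs_lt_between' in Hz. simpl in Hz. lra.
Qed.

Lemma nonpos_derive_antitone (f df : R -> R) (a b : R) : a <= b ->
  (forall x, a <= x <= b -> is_derive f x (df x)) ->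
  (forall x, a < x < b -> df x <= 0) -> f b <= f a.
Proof.
  intros Hab Hf Hdf. destruct (Req_dec a b) as [<-|Hne]; [lra|].
  destruct (MVT_cor2 f df a b) as [c [Hc Hcab]]; [lra| |].
  - intros x Hx. apply is_derive_Reals, Hf, Hx.
  - assert (df c <= 0) by (apply Hdf, Hcab). nra.
Qed.

Lemma sublevel_forward_invariant (W W' : R -> R) (T : Rbar) (r : R) :
  (forall t, 0 <= t -> Rbar_lt t T -> is_derive W t (W' t)) ->
  (forall t, 0 <= t -> Rbar_lt t T -> W t < r -> W' t <= 0) ->
  W 0 < r -> forall t, 0 <= t -> Rbar_lt t T -> W t < r.
Proof.
  intros HW Hdec H0 t1 Ht1 HT1.
  (* s0 = sup of the times up to which W stays below r: W is nonincreasing on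
     [0, s0], hence below r at s0, hence (by continuity) slightly beyond s0. *)
  destruct (Rlt_or_le (W t1) r) as [|Hexit]; [assumption|exfalso].
  assert (HT : forall t, 0 <= t <= t1 -> Rbar_lt t T).
  { intros t Ht. exact (Rbar_le_lt_trans t t1 T (proj2 Ht) HT1). }
  set (E := fun s => 0 <= s <= t1 /\ forall t, 0 <= t <= s -> W t < r).
  assert (E0 : E 0).
  { split; [lra|]. intros t Ht. replace t with 0 by lra. exact H0. }
  destruct (completeness E) as [s0 [Hub Hlub]].
  { exists t1. intros s Hs. apply Hs. }
  { exists 0. exact E0. }
  assert (Hs0 : 0 <= s0 <= t1).
  { split; [apply Hub, E0|apply Hlub; intros s Hs; apply Hs]. }
  assert (Hbefore : forall t, 0 <= t < s0 -> W t < r).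
  { intros t Ht. destruct (Rlt_or_le (W t) r) as [|Hr]; [assumption|].
    enough (s0 <= t) by lra.
    apply Hlub. intros s [_ Hs]. destruct (Rle_or_lt s t) as [|Hts]; [assumption|].
    specialize (Hs t ltac:(lra)). lra. }
  assert (Hs0r : W s0 < r).
  { enough (W s0 <= W 0) by lra.
    apply (nonpos_derive_antitone W W' 0 s0); try apply Hs0.
    - intros t Ht. apply HW, HT; lra.
    - intros t Ht. apply Hdec, Hbefore; try apply HT; lra. }
  destruct (continuous_lt_locally W s0 r) as [d Hd]; [|exact Hs0r|].
  { apply (@ex_derive_continuous R_AbsRing R_NormedModule).
    exists (W' s0). apply HW; [lra|apply HT; lra]. }
  assert (Hs1 : Rmin (s0 + d / 2) t1 <= s0).
  { pose proof (cond_pos d). apply Hub. split.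
    { split; [apply Rmin_glb|apply Rmin_r]; lra. }
    intros t Ht. destruct (Rlt_or_le t s0) as [|Hts]; [apply Hbefore; lra|].
    assert (t <= s0 + d / 2) by (pose proof (Rmin_l (s0 + d / 2) t1); lra).
    apply Hd, Rabs_lt_between'. lra. }
  revert Hs1. apply Rmin_case; [pose proof (cond_pos d); lra|].
  intros Ht1s0. replace s0 with t1 in Hs0r by lra. lra.
Qed.

Lemma linear_decay_bound (W W' : R -> R) (k : R) : 0 <= k ->
  (forall t, 0 <= t -> is_derive W t (W' t)) ->
  (forall t, 0 <= t -> W' t <= - k * W t) ->
  (forall t, 0 <= t -> 0 <= W t) ->
  forall t, 0 <= t -> W t * (1 + k * t) <= W 0.
Proof.
  intros Hk HW Hdec Hpos t Ht.
  replace (W 0) with (W 0 * (1 + k * 0)) by ring.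
  apply (nonpos_derive_antitone (fun s => W s * (1 + k * s))
           (fun s => W' s * (1 + k * s) + W s * k) 0 t Ht).
  - intros s Hs. apply (is_derive_mult W (fun s => 1 + k * s)).
    + apply HW. lra.
    + auto_derive; [exact I|ring].
    + intros; apply Rmult_comm.
  - (* (W (1 + k s))' <= - k W (1 + k s) + k W = - k^2 s W <= 0 *)
    intros s Hs. specialize (Hdec s ltac:(lra)). specialize (Hpos s ltac:(lra)).
    assert (0 <= k * s) by nra.
    assert (W' s * (1 + k * s) <= - k * W s * (1 + k * s)) by (apply Rmult_le_compat_r; lra).
    assert (0 <= k * s * (k * W s)) by (apply Rmult_le_pos; nra).
    nra.
Qed.

Lemma is_lim_of_sqr_le_decay (W Z : R -> R) (z0 k W0 : R) : 0 < k ->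
  (forall t, 0 <= t -> W t * (1 + k * t) <= W0) ->
  (forall t, 0 <= t -> (Z t - z0) ^ 2 <= W t) -> is_lim Z p_infty z0.
Proof.
  intros Hk Hdecay HZ. apply is_lim_spec. intros eps. simpl.
  destruct eps as [eps Heps]; simpl.
  exists (Rmax 0 (W0 / (k * eps ^ 2))). intros t Ht.
  assert (Ht0 : 0 <= t) by (pose proof (Rmax_l 0 (W0 / (k * eps ^ 2))); lra).
  assert (HkT : W0 < k * eps ^ 2 * t).
  { assert (Hq : W0 / (k * eps ^ 2) < t) by (pose proof (Rmax_r 0 (W0 / (k * eps ^ 2))); lra).
    assert (Hke : 0 < k * eps ^ 2) by (apply Rmult_lt_0_compat; [lra|apply pow_lt; lra]).
    apply (Rmult_lt_compat_l (k * eps ^ 2)) in Hq; [|exact Hke].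
    replace (k * eps ^ 2 * (W0 / (k * eps ^ 2))) with W0 in Hq by (field; lra). exact Hq. }
  specialize (Hdecay t Ht0). specialize (HZ t Ht0).
  assert (HW : W t < eps ^ 2).
  { destruct (Rlt_or_le (W t) (eps ^ 2)) as [|Hge]; [assumption|].
    assert (eps ^ 2 * (1 + k * t) <= W t * (1 + k * t)) by (apply Rmult_le_compat_r; nra).
    nra. }
  apply Rabs_lt_between'. nra.
Qed.

Definition quad_lyap (x0 y0 K x y : R) : R := (x - x0) ^ 2 + K * (y - y0) ^ 2.

Lemma dist2_lt_iff (x y x0 y0 eps : R) : 0 < eps ->
  dist2 x y x0 y0 < eps <-> (x - x0) ^ 2 + (y - y0) ^ 2 < eps ^ 2.
Proof.
  intros Heps. unfold dist2. rewrite <- (sqrt_pow2 eps) at 1 by lra.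
  pose proof (pow2_ge_0 (x - x0)). pose proof (pow2_ge_0 (y - y0)).
  split; [apply sqrt_lt_0_alt|intros; apply sqrt_lt_1_alt; split; [lra|assumption]].
Qed.

Section QuadraticLyapunov.

Variables (P Q : R -> R -> R) (x0 y0 K k rho : R).
Hypotheses (Heq : is_equilibrium P Q x0 y0) (HK : 1 <= K) (Hk : 0 < k) (Hrho : 0 < rho).
Hypothesis Hdecrease : forall x y, Rabs (x - x0) < rho -> Rabs (y - y0) < rho ->
  2 * (x - x0) * P x y + 2 * K * (y - y0) * Q x y <= - k * quad_lyap x0 y0 K x y.

Lemma quad_lyap_bounds (x y : R) :
  (x - x0) ^ 2 + (y - y0) ^ 2 <= quad_lyap x0 y0 K x y <=
  K * ((x - x0) ^ 2 + (y - y0) ^ 2).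
Proof.
  unfold quad_lyap. pose proof (pow2_ge_0 (x - x0)). pose proof (pow2_ge_0 (y - y0)).
  split; nra.
Qed.

Lemma quad_lyap_ge_sqr (x y : R) :
  (x - x0) ^ 2 <= quad_lyap x0 y0 K x y /\ (y - y0) ^ 2 <= quad_lyap x0 y0 K x y.
Proof.
  pose proof (quad_lyap_bounds x y). pose proof (pow2_ge_0 (x - x0)).
  pose proof (pow2_ge_0 (y - y0)). split; lra.
Qed.

Lemma quad_lyap_nonneg (x y : R) : 0 <= quad_lyap x0 y0 K x y.
Proof. pose proof (quad_lyap_ge_sqr x y). pose proof (pow2_ge_0 (x - x0)). lra. Qed.

Lemma quad_lyap_lt_of_dist2_lt (x y r : R) : 0 < r ->
  dist2 x y x0 y0 < sqrt (r / K) -> quad_lyap x0 y0 K x y < r.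
Proof.
  intros Hr Hd. apply dist2_lt_iff in Hd; [|apply sqrt_lt_R0, Rdiv_lt_0_compat; lra].
  rewrite pow2_sqrt in Hd by (apply Rlt_le, Rdiv_lt_0_compat; lra).
  destruct (quad_lyap_bounds x y) as [_ HV].
  apply (Rmult_lt_compat_l K) in Hd; [|lra].
  replace (K * (r / K)) with r in Hd by (field; lra). lra.
Qed.

Lemma quad_lyap_decrease (x y : R) : quad_lyap x0 y0 K x y < rho ^ 2 ->
  2 * (x - x0) * P x y + 2 * K * (y - y0) * Q x y <= - k * quad_lyap x0 y0 K x y.
Proof.
  intros HV. destruct (quad_lyap_ge_sqr x y) as [Hx Hy].
  assert (Habs : forall u, u ^ 2 < rho ^ 2 -> Rabs u < rho).
  { intros u Hu. rewrite <- (Rabs_pos_eq rho) by lra.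
    apply Rsqr_lt_abs_0. unfold Rsqr. nra. }
  apply Hdecrease; apply Habs; lra.
Qed.

Lemma is_derive_quad_lyap (T : Rbar) (X Y : R -> R) : is_solution_on P Q T X Y ->
  forall t, 0 <= t -> Rbar_lt t T ->
  is_derive (fun s => quad_lyap x0 y0 K (X s) (Y s)) t
    (2 * (X t - x0) * P (X t) (Y t) + 2 * K * (Y t - y0) * Q (X t) (Y t)).
Proof.
  intros Hsol t Ht HtT. destruct (Hsol t Ht HtT) as [HX HY].
  unfold quad_lyap. auto_derive.
  - split; [exists (P (X t) (Y t))|split; [exists (Q (X t) (Y t))|]]; tauto.
  - replace (Derive (fun s : R => X s) t) with (P (X t) (Y t))
      by (symmetry; apply is_derive_unique, HX).
    replace (Derive (fun s : R => Y s) t) with (Q (X t) (Y t))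
      by (symmetry; apply is_derive_unique, HY).
    ring.
Qed.

Lemma quad_lyap_sublevel_invariant (T : Rbar) (X Y : R -> R) (r : R) :
  is_solution_on P Q T X Y -> r <= rho ^ 2 ->
  quad_lyap x0 y0 K (X 0) (Y 0) < r ->
  forall t, 0 <= t -> Rbar_lt t T -> quad_lyap x0 y0 K (X t) (Y t) < r.
Proof.
  intros Hsol Hr H0.
  apply (sublevel_forward_invariant _ _ T r (is_derive_quad_lyap T X Y Hsol)); [|exact H0].
  intros t _ _ HV. cbv beta in HV |- *.
  pose proof (quad_lyap_nonneg (X t) (Y t)).
  pose proof (quad_lyap_decrease (X t) (Y t) ltac:(lra)). nra.
Qed.

Lemma quadratic_lyapunov_asymptotically_stable : locally_asymptotically_stable P Q x0 y0.
Proof.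
  split; [exact Heq|split].
  - intros eps Heps. set (r := Rmin (eps ^ 2) (rho ^ 2)).
    assert (Hr : 0 < r) by (apply Rmin_glb_lt; apply pow_lt; lra).
    assert (Hreps : r <= eps ^ 2) by apply Rmin_l.
    exists (sqrt (r / K)). split; [apply sqrt_lt_R0, Rdiv_lt_0_compat; lra|].
    intros T X Y Hsol H0 t Ht HtT.
    pose proof (quad_lyap_sublevel_invariant T X Y r Hsol (Rmin_r _ _)
                  (quad_lyap_lt_of_dist2_lt _ _ r Hr H0) t Ht HtT).
    destruct (quad_lyap_bounds (X t) (Y t)) as [Hd _].
    apply dist2_lt_iff; lra.
  - exists (sqrt (rho ^ 2 / K)). split; [apply sqrt_lt_R0, Rdiv_lt_0_compat; [apply pow_lt|]; lra|].
    intros X Y Hsol H0.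
    assert (Hin : forall t, 0 <= t -> quad_lyap x0 y0 K (X t) (Y t) < rho ^ 2).
    { intros t Ht. apply (quad_lyap_sublevel_invariant p_infty X Y (rho ^ 2) Hsol (Rle_refl _));
        [|exact Ht|exact I].
      apply quad_lyap_lt_of_dist2_lt; [apply pow_lt; lra|exact H0]. }
    assert (Hdecay := linear_decay_bound (fun s => quad_lyap x0 y0 K (X s) (Y s)) _ k
      ltac:(lra) (fun t Ht => is_derive_quad_lyap p_infty X Y Hsol t Ht I)
      (fun t Ht => quad_lyap_decrease _ _ (Hin t Ht))
      (fun t _ => quad_lyap_nonneg (X t) (Y t))).
    split; apply (is_lim_of_sqr_le_decay _ _ _ k _ Hk Hdecay); intros t _;
      apply quad_lyap_ge_sqr.
Qed.

End QuadraticLyapunov.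

Lemma locally_box (S : R -> R -> Prop) (x0 y0 : R) :
  locally (x0, y0) (fun p => S (fst p) (snd p)) ->
  exists delta, 0 < delta /\
    forall x y, Rabs (x - x0) < delta -> Rabs (y - y0) < delta -> S x y.
Proof.
  intros [d Hd]. exists d. split; [apply cond_pos|].
  intros x y Hx Hy. exact (Hd (x, y) (conj Hx Hy)).
Qed.

Lemma continuous_affine (c d y0 : R) : continuous (fun y => c + d * y) y0.
Proof.
  apply (continuous_plus (fun _ => c) (fun y => d * y)); [apply continuous_const|].
  apply (continuous_mult (fun _ => d) (fun y => y)); [apply continuous_const|apply continuous_id].
Qed.

Lemma locally_affine_neq_0 (c d : R) : c <> 0 -> locally 0 (fun y => c + d * y <> 0).
Proof.
  intros Hc. apply (filter_imp (fun y => - Rabs (c + d * y) < 0)).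
  - intros y Hy Hy0. rewrite Hy0, Rabs_R0 in Hy. lra.
  - apply continuous_lt_locally.
    + apply (continuous_opp (fun y => Rabs (c + d * y))).
      apply continuous_Rabs_comp, continuous_affine.
    + rewrite Rmult_0_r, Rplus_0_r. pose proof (Rabs_pos_lt c Hc). lra.
Qed.

Lemma continuous_div_affine_snd (f : R * R -> R) (c d : R) (p : R * R) :
  continuous f p -> c + d * snd p <> 0 ->
  continuous (fun q => f q / (c + d * snd q)) p.
Proof.
  destruct p as [x y]. intros Hf Hy.
  apply (continuous_mult f (fun q => / (c + d * snd q))); [exact Hf|].
  apply (continuous_comp (fun q : R * R => snd q) (fun y => / (c + d * y))).
  - apply continuous_snd.
  - apply continuous_Rinv_comp; [apply continuous_affine|exact Hy].
Qed.

Lemma lyapunov_cross_term_bound (e c C K u y A h : R) : 0 < e -> 0 <= K ->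
  Rabs A <= C -> h <= - c -> C ^ 2 <= e * c * K ->
  2 * u * (- e * u - y * A) + 2 * K * y ^ 2 * h <= - e * u ^ 2 - c * K * y ^ 2.
Proof.
  intros He HK HA Hh HC.
  (* the cross term is absorbed by 0 <= (e u + y A)^2 *)
  assert (HA2 : A ^ 2 <= C ^ 2).
  { rewrite <- (pow2_abs A). pose proof (Rabs_pos A). apply pow_incr. lra. }
  assert (Hsq : 0 <= (e * u + y * A) ^ 2) by apply pow2_ge_0.
  assert (Hy2 : 0 <= y ^ 2) by apply pow2_ge_0.
  assert (HyA : y ^ 2 * A ^ 2 <= y ^ 2 * (e * c * K)) by (apply Rmult_le_compat_l; lra).
  assert (HKh : K * y ^ 2 * h <= K * y ^ 2 * (- c)) by (apply Rmult_le_compat_l; nra).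
  apply (Rmult_le_reg_l e); [exact He|]. nra.
Qed.

Definition sir_x (a e g x y : R) : R := a - e * x - x * y / (1 + g * y).
Definition sir_y (b g m n x y : R) : R := x * y / (1 + g * y) - y - m * y / (b + n * y).

Section SIRModel.

Variables a b g m n e : R.
Hypotheses (hb : 0 < b) (hm : 0 < m) (he : 0 < e).

Lemma dx_sir_x (x y : R) : dx (sir_x a e g) x y = - e - y / (1 + g * y).
Proof.
  apply is_derive_unique. unfold sir_x.
  auto_derive; [exact I|]. unfold Rdiv. ring.
Qed.

Lemma dy_sir_x_0 (x : R) : dy (sir_x a e g) x 0 = - x.
Proof.
  apply is_derive_unique. unfold sir_x.
  auto_derive; [lra|]. field; lra.
Qed.

Lemma dx_sir_y (x y : R) : dx (sir_y b g m n) x y = y / (1 + g * y).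
Proof.
  apply is_derive_unique. unfold sir_y.
  auto_derive; [exact I|]. unfold Rdiv. ring.
Qed.

Lemma dy_sir_y (x y : R) : 1 + g * y <> 0 -> b + n * y <> 0 ->
  dy (sir_y b g m n) x y = x / (1 + g * y) ^ 2 - 1 - m * b / (b + n * y) ^ 2.
Proof.
  intros Hg Hn. apply is_derive_unique. unfold sir_y.
  auto_derive; [tauto|]. field; tauto.
Qed.

Lemma dxx_sir_y (x y : R) : dxx (sir_y b g m n) x y = 0.
Proof.
  unfold dxx. rewrite (Derive_ext _ (fun _ => y / (1 + g * y))) by (intros; apply dx_sir_y).
  apply Derive_const.
Qed.

Lemma dxy_sir_y_0 (x : R) : dxy (sir_y b g m n) x 0 = 1.
Proof.
  unfold dxy. rewrite (Derive_ext _ (fun v => v / (1 + g * v))) by (intros; apply dx_sir_y).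
  apply is_derive_unique. auto_derive; [lra|]. field.
Qed.

Lemma dyy_sir_y_0 (x : R) : dyy (sir_y b g m n) x 0 = 2 * m * n / b ^ 2 - 2 * g * x.
Proof.
  unfold dyy.
  rewrite (Derive_ext_loc _ (fun v => x / (1 + g * v) ^ 2 - 1 - m * b / (b + n * v) ^ 2)).
  - apply is_derive_unique. auto_derive.
    + rewrite !Rmult_0_r, !Rplus_0_r, !Rmult_1_r.
      repeat split; try exact I; apply Rgt_not_eq; nra.
    + field; lra.
  - apply (filter_imp (fun v => 1 + g * v <> 0 /\ b + n * v <> 0)).
    + intros v [Hg Hn]. apply dy_sir_y; assumption.
    + apply filter_and; apply locally_affine_neq_0; lra.
Qed.

Lemma sir_equilibrium : is_equilibrium (sir_x a e g) (sir_y b g m n) (a / e) 0.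
Proof. unfold is_equilibrium, sir_x, sir_y. split; field; lra. Qed.

Lemma sir_jac_eigenvalues (x0 : R) :
  jac_eigenvalues (sir_x a e g) (sir_y b g m n) x0 0 (- e) (x0 - 1 - m / b).
Proof.
  unfold jac_eigenvalues, jac_tr, jac_det.
  rewrite dx_sir_x, dy_sir_x_0, dx_sir_y, dy_sir_y by lra.
  split; field; lra.
Qed.

Lemma sir_threshold : e * (a / e - 1 - m / b) = a - e * (m + b) / b.
Proof. field. lra. Qed.

Lemma sir_local_bounds (x0 r : R) : x0 - 1 - m / b < r ->
  exists delta, 0 < delta /\ forall x y, Rabs (x - x0) < delta -> Rabs y < delta ->
    Rabs (x / (1 + g * y)) < Rabs x0 + 1 /\ x / (1 + g * y) - 1 - m / (b + n * y) < r.
Proof.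
  intros Hr.
  destruct (locally_box (fun x y => Rabs (x / (1 + g * y)) < Rabs x0 + 1 /\
                                     x / (1 + g * y) - 1 - m / (b + n * y) < r) x0 0)
    as [delta [Hdelta Hbox]].
  - assert (Hg0 : 1 + g * snd (x0, 0) <> 0) by (simpl; lra).
    assert (Hn0 : b + n * snd (x0, 0) <> 0) by (simpl; lra).
    assert (HA := continuous_div_affine_snd fst 1 g (x0, 0) (continuous_fst _ _) Hg0).
    apply filter_and; apply continuous_lt_locally.
    + apply (continuous_comp (fun q : R * R => fst q / (1 + g * snd q)) Rabs).
      * exact HA.
      * apply continuous_Rabs.
    + simpl. rewrite Rmult_0_r, Rplus_0_r, Rdiv_1_r. lra.
    + apply (continuous_minus (fun q : R * R => fst q / (1 + g * snd q) - 1)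
                              (fun q => m / (b + n * snd q))).
      * apply (continuous_minus (fun q : R * R => fst q / (1 + g * snd q)) (fun _ => 1));
          [exact HA|apply continuous_const].
      * apply continuous_div_affine_snd; [apply continuous_const|exact Hn0].
    + simpl. rewrite !Rmult_0_r, !Rplus_0_r, Rdiv_1_r. exact Hr.
  - exists delta. split; [exact Hdelta|]. intros x y Hx Hy.
    apply Hbox; [exact Hx|rewrite Rminus_0_r; exact Hy].
Qed.

Lemma sir_quadratic_lyapunov : a < e * (m + b) / b ->
  exists K k rho, 1 <= K /\ 0 < k /\ 0 < rho /\
    forall x y, Rabs (x - a / e) < rho -> Rabs (y - 0) < rho ->
      2 * (x - a / e) * sir_x a e g x y + 2 * K * (y - 0) * sir_y b g m n x y
        <= - k * quad_lyap (a / e) 0 K x y.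
Proof.
  intros Ha. pose proof sir_threshold as Hth.
  assert (Hsig : a / e - 1 - m / b < 0) by nra.
  set (x0 := a / e) in *. set (c := - (x0 - 1 - m / b) / 2). set (C := Rabs x0 + 1).
  assert (Hc : 0 < c) by (unfold c; lra).
  destruct (sir_local_bounds x0 (- c)) as [rho [Hrho Hbox]]; [unfold c; lra|].
  assert (HK : 0 <= C ^ 2 / (e * c))
    by (apply Rdiv_le_0_compat; [apply pow2_ge_0|apply Rmult_lt_0_compat; lra]).
  (* this K makes C^2 <= e c K *)
  exists (1 + C ^ 2 / (e * c)), (Rmin e c), rho.
  split; [lra|split; [apply Rmin_glb_lt; lra|split; [exact Hrho|]]].
  intros x y Hx Hy. rewrite Rminus_0_r in *.
  destruct (Hbox x y Hx Hy) as [HA Hh].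
  assert (Ha0 : a = e * x0) by (unfold x0; field; lra).
  replace (sir_x a e g x y) with (- e * (x - x0) - y * (x / (1 + g * y)))
    by (unfold sir_x; rewrite Ha0 at 1; unfold Rdiv; ring).
  replace (2 * (1 + C ^ 2 / (e * c)) * y * sir_y b g m n x y)
    with (2 * (1 + C ^ 2 / (e * c)) * y ^ 2 * (x / (1 + g * y) - 1 - m / (b + n * y)))
    by (unfold sir_y, Rdiv; ring).
  eapply Rle_trans.
  { apply (lyapunov_cross_term_bound e c C); try lra.
    - unfold C. lra.
    - replace (e * c * (1 + C ^ 2 / (e * c))) with (e * c + C ^ 2) by (field; lra). nra. }
  unfold quad_lyap. rewrite Rminus_0_r.
  assert (Hu : Rmin e c * (x - x0) ^ 2 <= e * (x - x0) ^ 2)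
    by (apply Rmult_le_compat_r; [apply pow2_ge_0|apply Rmin_l]).
  assert (Hv : Rmin e c * ((1 + C ^ 2 / (e * c)) * y ^ 2) <= c * ((1 + C ^ 2 / (e * c)) * y ^ 2))
    by (apply Rmult_le_compat_r; [pose proof (pow2_ge_0 y); nra|apply Rmin_r]).
  lra.
Qed.

Lemma sir_saddle_node : a = e * (m + b) / b ->
  n <> ((e * g + 1) * b ^ 2 + m * (e * g + 1) * b) / (m * e) ->
  saddle_node (sir_x a e g) (sir_y b g m n) (a / e) 0.
Proof.
  intros Ha Hn.
  assert (Hx0 : a / e = (m + b) / b) by (rewrite Ha; field; lra).
  assert (Hsig : a / e - 1 - m / b = 0) by (rewrite Hx0; field; lra).
  destruct (sir_jac_eigenvalues (a / e)) as [Htr Hdet]. rewrite Hsig in Htr, Hdet.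
  split; [apply sir_equilibrium|].
  split; [rewrite <- Hdet; ring|]. split; [rewrite <- Htr; lra|].
  exists (- (a / e) / e), 1, 0, 1.
  rewrite dx_sir_x, dy_sir_x_0, dx_sir_y, dy_sir_y by lra.
  unfold hess_vv. rewrite dxx_sir_y, dxy_sir_y_0, dyy_sir_y_0.
  split; [right; lra|]. split; [right; lra|].
  repeat split; try (rewrite ?Hx0; field; lra).
  intros Hhess. apply Hn.
  match type of Hhess with ?E = 0 =>
    assert (Hid : n - ((e * g + 1) * b ^ 2 + m * (e * g + 1) * b) / (m * e) = b ^ 2 / (2 * m) * E)
      by (rewrite Hx0; field; lra) end.
  rewrite Hhess, Rmult_0_r in Hid. lra.
Qed.

End SIRModel.

Theorem theorem2p1 (a b g m n e : R)
  (ha : 0 < a) (hb : 0 < b) (hg : 0 < g) (hm : 0 < m) (hn : 0 < n)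
  (he0 : 0 < e) (he1 : e < 1) :
  let P := fun x y => a - e * x - x * y / (1 + g * y) in
  let Q := fun x y => x * y / (1 + g * y) - y - m * y / (b + n * y) in
  (a < e * (m + b) / b ->
     locally_asymptotically_stable P Q (a / e) 0 /\ stable_node P Q (a / e) 0) /\
  (a > e * (m + b) / b -> saddle P Q (a / e) 0) /\
  (a = e * (m + b) / b ->
     n <> ((e * g + 1) * b ^ 2 + m * (e * g + 1) * b) / (m * e) ->
     saddle_node P Q (a / e) 0).
Proof.
  intros P Q.
  pose proof (sir_threshold a b m e hb he0) as Hth.
  pose proof (sir_equilibrium a b g m n e hb he0) as Heq.
  pose proof (sir_jac_eigenvalues a b g m n e hb (a / e)) as Heig.
  split; [|split].
  - intros Ha.
    destruct (sir_quadratic_lyapunov a b g m n e hb he0 Ha) as (K & k & rho & HK & Hk & Hrho & Hdec).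
    split; [exact (quadratic_lyapunov_asymptotically_stable P Q _ _ K k rho Heq HK Hk Hrho Hdec)|].
    split; [exact Heq|]. exists (- e), (a / e - 1 - m / b). split; [exact Heig|]. nra.
  - intros Ha. split; [exact Heq|].
    exists (- e), (a / e - 1 - m / b). split; [exact Heig|]. nra.
  - apply sir_saddle_node; assumption.
Qed.
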